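(* Let $V=\{1,\dots,n\}$, let $(\bar\Omega,\mathcal F,\mathbb P)$ be a probability space, and let $\sigma:\{0,1\}^n\times\bar\Omega\to\mathbb R$ be such that for every $\omega\in\bar\Omega$ the set function $X\mapsto\sigma(X,\omega)$ (identifying $X\subseteq V$ with its characteristic vector $x\in\{0,1\}^n$) is nondecreasing and submodular, and for each $x$ the random variable $\sigma(x)=\sigma(x,\cdot)$ is integrable. Let $\mathcal X\subseteq\{0,1\}^n$ and $\alpha\in(0,1]$. Let $\bar x\in\mathcal X$ with support $\bar X=\{j\in V:\bar x_j=1\}$, let $r=|V\setminus\bar X|$ and let $j_1,\dots,j_r$ be any ordering of $V\setminus\bar X$. For $i=1,\dots,r$ define $\bar x^{j_i}=\mathbf 1-\sum_{l=i+1}^{r}\mathbf e_{j_l}$ and $\bar\delta_{j_i}(\bar x)=\mathrm{CVaR}_\alpha(\sigma(\bar x^{j_i}))-\mathrm{CVaR}_\alpha(\sigma(\bar x))$. Then for every $x\in\mathcal X$ and every $\psi\in\mathbb R$ with $\psi\le\mathrm{CVaR}_\alpha(\sigma(x))$, $$\psi\le \mathrm{CVaR}_\alpha(\sigma(\bar x))+\sum_{i=1}^r\bar\delta_{j_i}(\bar x)\,x_{j_i}.$$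
   Context: For a random variable $Y$ with finite expectation and $\alpha\in(0,1]$, $\mathrm{CVaR}_\alpha(Y)=\max_{\eta\in\mathbb R}\{\eta-\frac1\alpha\mathbb E([\eta-Y]_+)\}$, where $[z]_+=\max(z,0)$. $\mathbf e_j$ is the $j$-th unit vector in $\mathbb R^n$ and $\mathbf 1$ is the all-ones vector in $\mathbb R^n$. *)

From HB Require Import structures.
From mathcomp Require Import all_boot all_order all_algebra.
From mathcomp Require Import all_classical all_reals all_analysis.
Set Implicit Arguments. Unset Strict Implicit. Unset Printing Implicit Defensive.
Import Order.TTheory GRing.Theory Num.Theory.
Local Open Scope classical_set_scope.
Local Open Scope ring_scope.

(* CVaR_alpha(Y) = sup_{eta in R} { eta - (1/alpha) E[(eta - Y)_+] }
   (the paper writes max; the sup is attained for integrable Y). *)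
Definition CVaR d (T : measurableType d) (R : realType) (P : probability T R)
  (alpha : R) (Y : T -> R) : \bar R :=
  ereal_sup [set (eta%:E - (alpha^-1)%:E *
                  (\int[P]_w (Num.max (eta - Y w) 0)%:E))%E | eta in [set: R]].

Definition xbar_up (n r : nat) (j : 'I_r -> 'I_n) (i : 'I_r) : {set 'I_n} :=
  [set: 'I_n] :\: [set j l | l in [set l : 'I_r | (i < l)%N]].

From HB Require Import structures.
From mathcomp Require Import all_boot all_order all_algebra.
From mathcomp Require Import all_classical all_reals all_analysis.
From mathcomp Require Import measurable_realfun.
From mathcomp Require Import lra.
Import Order.TTheory GRing.Theory Num.Theory.
Local Open Scope classical_set_scope.
Local Open Scope ring_scope.

(* CVaR is monotone and finite, so
   [c X := CVaR_alpha(sigma X)] is a monotone real set function.  If [x] meets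
   no [j_i], then [x] lies in [xbar] (the [j_i] enumerate the complement of
   [xbar]) and [c x <= c xbar].  Otherwise, for the largest [i] with [j_i] in
   [x], [x] avoids every [j_l] with [l > i], i.e. [x] lies in [xbar^{j_i}], so
   [c x <= c xbar + delta_{j_i}], and the other increments are nonnegative. *)

Section CVaR_properties.
Context d (T : measurableType d) (R : realType) (P : probability T R).

Lemma measurable_max_sub (Y : T -> R) (eta : R) : measurable_fun setT Y ->
  measurable_fun setT (fun w => (Num.max (eta - Y w) 0)%:E).
Proof.
move=> mY; apply/measurable_EFinP/measurable_maxr => //.
exact/measurable_funB.
Qed.

Lemma integrable_max_sub (Y : T -> R) (eta : R) :
  P.-integrable setT (EFin \o Y) ->
  P.-integrable setT (fun w => (Num.max (eta - Y w) 0)%:E).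
Proof.
move=> iY; have mY : measurable_fun setT Y.
  exact/measurable_EFinP/(measurable_int _ iY).
have iBY : P.-integrable setT (fun w => (eta%:E - (Y w)%:E)%E).
  exact: integrableB (finite_measure_integrable_cst _ _ _) iY.
apply: le_integrable iBY => //; first exact: measurable_max_sub.
move=> w _; rewrite -EFinB !abse_EFin lee_fin.
by rewrite ger0_norm ?le_max ?lexx ?orbT // ge_max normr_ge0 ler_norm.
Qed.

Lemma CVaR_le_expectation (alpha : R) (Y : T -> R) : 0 < alpha <= 1 ->
  P.-integrable setT (EFin \o Y) ->
  (CVaR P alpha Y <= \int[P]_w (Y w)%:E)%E.
Proof.
move=> /andP[alpha_gt0 alpha_le1] iY; apply/ereal_supP => _ [eta _ <-].
set I := (\int[P]_w _)%E.
have iG := integrable_max_sub _ eta iY.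
have /fineK I_E : I \is a fin_num by exact: integrable_fin_num.
have /fineK EY_E : (\int[P]_w (Y w)%:E)%E \is a fin_num.
  exact: integrable_fin_num.
have I_ge0 : 0 <= fine I.
  by rewrite -lee_fin I_E; apply: integral_ge0 => w _; rewrite lee_fin le_max lexx orbT.
have I_ge : eta - fine (\int[P]_w (Y w)%:E)%E <= fine I.
  rewrite -lee_fin EFinB I_E EY_E.
  have iBY : P.-integrable setT (fun w => (eta%:E - (Y w)%:E)%E).
    exact: integrableB (finite_measure_integrable_cst _ _ _) iY.
  have <- : (\int[P]_w (eta%:E - (Y w)%:E) = eta%:E - \int[P]_w (Y w)%:E)%E.
    rewrite integralB_EFin //; last exact: finite_measure_integrable_cst.
    by rewrite integral_cst // [X in (_ * X)%E]probability_setT mule1.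
  apply: le_integral => //.
  by move=> w _; rewrite -EFinB lee_fin le_max lexx.
have : fine I <= alpha^-1 * fine I by rewrite ler_peMl // invf_ge1.
rewrite -I_E -EY_E -EFinM -EFinB lee_fin; lra.
Qed.

Lemma CVaR_fin_num (alpha : R) (Y : T -> R) : 0 < alpha <= 1 ->
  P.-integrable setT (EFin \o Y) -> CVaR P alpha Y \is a fin_num.
Proof.
move=> alpha01 iY; rewrite fin_numElt; apply/andP; split.
  have /fineK I_E : (\int[P]_w (Num.max (0 - Y w) 0)%:E)%E \is a fin_num.
    exact/integrable_fin_num/integrable_max_sub.
  apply: (@lt_le_trans _ _ (0%:E - (alpha^-1)%:E * \int[P]_w (Num.max (0 - Y w) 0)%:E)%E).
    by rewrite -I_E -EFinM -EFinB ltNyr.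
  by apply: ereal_sup_ubound; exists 0.
apply: le_lt_trans (CVaR_le_expectation _ _ alpha01 iY) _.
have /fineK <- : (\int[P]_w (Y w)%:E)%E \is a fin_num by exact: integrable_fin_num.
exact: ltry.
Qed.

Lemma le_CVaR (alpha : R) (Y Z : T -> R) : 0 <= alpha ->
  measurable_fun setT Y -> measurable_fun setT Z -> (forall w, Y w <= Z w) ->
  (CVaR P alpha Y <= CVaR P alpha Z)%E.
Proof.
move=> alpha_ge0 mY mZ YleZ; apply/ereal_supP => _ [eta _ <-].
apply: le_trans (ereal_sup_ubound _) => /=; last by exists eta.
apply: leeB => //; apply: lee_wpmul2l; first by rewrite lee_fin invr_ge0.
apply: ge0_le_integral => //; try exact: measurable_max_sub.
- by move=> w _; rewrite lee_fin le_max lexx orbT.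
- by move=> w _; rewrite lee_fin le_max2 // lerB.
Qed.

End CVaR_properties.

Section Monotone_set_function.
Variables (n : nat) (xbar : {set 'I_n}) (j : 'I_#|~: xbar| -> 'I_n).
Hypothesis j_out : forall i, j i \notin xbar.

Lemma sub_xbar_up i : xbar \subset xbar_up j i.
Proof.
apply/fintype.subsetP => k k_xbar; rewrite !inE andbT.
by apply/finset.imsetP => -[l _ kE]; move: (j_out l); rewrite -kE k_xbar.
Qed.

Lemma sub_xbar_up_max (x : {set 'I_n}) (i : 'I_#|~: xbar|) :
  (forall l, j l \in x -> (l <= i)%N) -> x \subset xbar_up j i.
Proof.
move=> x_le_i; apply/fintype.subsetP => k k_x; rewrite !inE andbT.
apply/finset.imsetP => -[l]; rewrite inE => i_lt_l kE.
by move: (x_le_i l); rewrite -kE k_x leqNgt i_lt_l => /(_ isT).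
Qed.

Hypothesis j_inj : injective j.

Lemma imset_j_setC : (j @: [set: 'I_#|~: xbar|])%SET = ~: xbar.
Proof.
apply/eqP; rewrite eqEcard card_imset // cardsT card_ord leqnn andbT.
by apply/fintype.subsetP => _ /finset.imsetP[i _ ->]; rewrite inE j_out.
Qed.

Lemma sub_xbar (x : {set 'I_n}) : (forall i, j i \notin x) -> x \subset xbar.
Proof.
move=> x_out; apply/fintype.subsetP => k k_x; apply/negPn/negP => k_xbarC.
have : k \in ~: xbar by rewrite inE.
by rewrite -imset_j_setC => /finset.imsetP[i _ kE]; move: (x_out i); rewrite -kE k_x.
Qed.

Variables (R : realDomainType) (c : {set 'I_n} -> R).
Hypothesis c_mono : {homo c : A B / A \subset B >-> A <= B}.

Lemma le_add_sum_xbar_up (x : {set 'I_n}) :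
  c x <= c xbar + \sum_(i < #|~: xbar|) (c (xbar_up j i) - c xbar) * (j i \in x)%:R.
Proof.
have incr_ge0 i : 0 <= (c (xbar_up j i) - c xbar) * (j i \in x)%:R.
  by rewrite mulr_ge0 // subr_ge0 c_mono // sub_xbar_up.
have [i0 i0_x | x_out] := pickP (fun i => j i \in x); last first.
  rewrite big1 ?addr0; first by apply/c_mono/sub_xbar => i; rewrite x_out.
  by move=> i _; rewrite x_out mulr0.
case: (@arg_maxnP _ i0 (fun i => j i \in x) val i0_x) => i i_x i_max.
rewrite (bigD1 i) //= i_x mulr1 addrA addrCA subrr addr0.
apply: le_trans (c_mono _ _ (sub_xbar_up_max x i i_max)) _.
by rewrite lerDl sumr_ge0.
Qed.

End Monotone_set_function.

Theorem proposition2 (d : measure_display) (T : measurableType d) (R : realType)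
  (P : probability T R) (n : nat) (sigma : {set 'I_n} -> T -> R)
  (sigma_mono : forall (w : T) (A B : {set 'I_n}), A \subset B -> sigma A w <= sigma B w)
  (sigma_submod : forall (w : T) (A B : {set 'I_n}),
      sigma (A :|: B) w + sigma (A :&: B) w <= sigma A w + sigma B w)
  (sigma_int : forall A : {set 'I_n}, P.-integrable setT (fun w => (sigma A w)%:E))
  (calX : {set {set 'I_n}}) (alpha : R) (halpha : 0 < alpha <= 1)
  (xbar : {set 'I_n}) (hxbar : xbar \in calX)
  (j : 'I_#|~: xbar| -> 'I_n) (j_inj : injective j) (j_out : forall i, j i \notin xbar)
  (x : {set 'I_n}) (hx : x \in calX) (psi : R)
  (hpsi : (psi%:E <= CVaR P alpha (sigma x))%E) :
  (psi%:E <= CVaR P alpha (sigma xbar) +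
     \sum_(i < #|~: xbar|)
        ((CVaR P alpha (sigma (xbar_up j i)) - CVaR P alpha (sigma xbar))
           * ((j i \in x)%:R)%:E))%E.
Proof.
pose c A := fine (CVaR P alpha (sigma A)).
have cE A : CVaR P alpha (sigma A) = (c A)%:E.
  by rewrite /c fineK //; apply: CVaR_fin_num => //; exact: sigma_int.
have c_mono : {homo c : A B / A \subset B >-> A <= B}.
  move=> A B AB; rewrite -lee_fin -!cE.
  have mS C : measurable_fun setT (sigma C).
    exact/measurable_EFinP/(measurable_int _ (sigma_int C)).
  by apply: le_CVaR => // [|w]; [case/andP: halpha => /ltW | exact: sigma_mono].
under eq_bigr => i _ do rewrite !cE -EFinB -EFinM.
rewrite cE sumEFin -EFinD; rewrite cE in hpsi.
apply: le_trans hpsi _; exact: le_add_sum_xbar_up.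
Qed.
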